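(* Let $(\mathcal W_s)_{s\in\mathcal S}$ be a strict HN-stratification of $\mathcal G$ and let $M\in\mathcal G$. Suppose $M=M_0\supsetneq M_1\supsetneq\cdots\supsetneq M_m=0$ and $M=N_0\supsetneq N_1\supsetneq\cdots\supsetneq N_n=0$ are two chains of strict subobjects of $M$ with $M_{k-1}/M_k\in\mathcal W_{s_k}$, $s_1>s_2>\cdots>s_m$, and $N_{j-1}/N_j\in\mathcal W_{u_j}$, $u_1>u_2>\cdots>u_n$. Then $m=n$, and $s_k=u_k$ and $M_k=N_k$ for all $k$.
   Context: Let $\Lambda$ be a finite dimensional algebra over a field and $\mathrm{mod}\text-\Lambda$ the category of finitely generated right $\Lambda$-modules. Fix a torsion class $\mathcal G\subseteq\mathrm{mod}\text-\Lambda$ (closed under isomorphisms, extensions and quotients). For $B\in\mathcal G$, a subobject of $B$ is a submodule in $\mathcal G$; a subobject $A\subseteq B$ is strict if $A\cap B'\in\mathcal G$ for every subobject $B'$ of $B$; a strict quotient of $B$ is $B/A$ with $A$ a strict subobject. A strict morphism is a homomorphism $f:A\to B$ with $A,B\in\mathcal G$ such that $\ker f\in\mathcal G$ is a strict subobject of $A$ and $\operatorname{im} f$ is a strict subobject of $B$. A pseudo-wide subcategory of $\mathcal G$ is a nonempty class $\mathcal W\subseteq\mathcal G$ such that for every strict morphism $f:A\to B$ with $A,B\in\mathcal W$, $\ker f,\operatorname{im} f,\operatorname{coker} f\in\mathcal W$, and $\mathcal W$ is closed under strict extensions (if $0\to A\to B\to C\to 0$ is exact with $A$ a strict subobject of $B$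 and $A,C\in\mathcal W$, then $B\in\mathcal W$). A strict HN-stratification of $\mathcal G$ is a family $(\mathcal W_s)_{s\in\mathcal S}$ of pseudo-wide subcategories indexed by a totally ordered set $\mathcal S$ such that: (1) if $s_0<s_1$, every strict morphism $X\to Y$ with $X\in\mathcal W_{s_0}$, $Y\in\mathcal W_{s_1}$ is zero; (2) every $M\in\mathcal G$ has a chain of strict subobjects $M=M_0\supseteq M_1\supseteq\cdots\supseteq M_m=0$ with $M_{k-1}/M_k\in\mathcal W_{s_k}$ and $s_1>s_2>\cdots>s_m$. *)

(* Right modules over a finite-dimensional algebra L over a
   field F are modelled as finite-dimensional matrix representations:
   the module is the space of row vectors 'rV_(mdim X), with v . a := v *m act a. *)
From HB Require Import structures.
From mathcomp Require Import all_boot all_order all_algebra all_field.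
Unset Printing Implicit Defensive.
Import Order.TTheory GRing.Theory.
Local Open Scope ring_scope.

Section Modules.
Variables (F : fieldType) (L : falgType F).

Record module := Module {
  mdim : nat;
  act : L -> 'M[F]_mdim;
  act_linear : forall (c : F) (a b : L), act (c *: a + b) = c *: act a + act b;
  act_mul : forall a b : L, act (a * b) = act a *m act b;
  act_one : act 1 = 1%:M
}.

Definition hom (X Y : module) (f : 'M[F]_(mdim X, mdim Y)) : Prop :=
  forall a : L, act X a *m f = f *m act Y a.

Definition iso (X Y : module) : Prop :=
  exists (f : 'M[F]_(mdim X, mdim Y)) (g : 'M[F]_(mdim Y, mdim X)),
    [/\ hom X Y f, hom Y X g, f *m g = 1%:M & g *m f = 1%:M].

Definition submodule (X : module) m (U : 'M[F]_(m, mdim X)) : Prop :=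
  forall a : L, (U *m act X a <= U)%MS.

(* For submodules U <= V of X: the subquotient V/U is (isomorphic to) a
   module of the class C.  Witness: a map g defined on V, L-linear on V,
   surjective from V onto Y, with kernel (inside V) exactly U. *)
Definition subquot (C : module -> Prop) (X : module) m1 m2
    (V : 'M[F]_(m1, mdim X)) (U : 'M[F]_(m2, mdim X)) : Prop :=
  exists Y : module, C Y /\
    exists g : 'M[F]_(mdim X, mdim Y),
      [/\ forall a : L, V *m (act X a *m g) = V *m (g *m act Y a),
          (1%:M <= V *m g)%MS &
          (V :&: kermx g == U)%MS].

Definition subC (C : module -> Prop) (X : module) m (U : 'M[F]_(m, mdim X)) :=
  subquot C X m (mdim X) U (0 : 'M[F]_(mdim X)).

Definition quotC (C : module -> Prop) (X : module) m (U : 'M[F]_(m, mdim X)) :=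
  subquot C X (mdim X) m (1%:M : 'M[F]_(mdim X)) U.

Definition iso_closed (C : module -> Prop) : Prop :=
  forall X Y : module, iso X Y -> C X -> C Y.

Definition torsion_class (G : module -> Prop) : Prop :=
  [/\ iso_closed G,
      (forall (X : module) m (U : 'M[F]_(m, mdim X)),
          G X -> submodule X m U -> quotC G X m U) &
      (forall (X : module) m (U : 'M[F]_(m, mdim X)),
          submodule X m U -> subC G X m U -> quotC G X m U -> G X)].

Definition subobject (G : module -> Prop) (B : module) m (U : 'M[F]_(m, mdim B)) :=
  submodule B m U /\ subC G B m U.

Definition strict_sub (G : module -> Prop) (B : module) m (U : 'M[F]_(m, mdim B)) :=
  [/\ G B, subobject G B m U &
      forall m' (V : 'M[F]_(m', mdim B)), subobject G B m' V -> subC G B (mdim B) (U :&: V)%MS].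

Definition strict_morph (G : module -> Prop) (X Y : module)
    (f : 'M[F]_(mdim X, mdim Y)) : Prop :=
  [/\ G X, G Y, hom X Y f, strict_sub G X (mdim X) (kermx f) & strict_sub G Y (mdim X) f].

Definition pseudo_wide (G W : module -> Prop) : Prop :=
  [/\ exists X, W X,
      forall X, W X -> G X,
      iso_closed W,
      (forall (X Y : module) (f : 'M[F]_(mdim X, mdim Y)),
          W X -> W Y -> strict_morph G X Y f ->
          [/\ subC W X (mdim X) (kermx f), subC W Y (mdim X) f & quotC W Y (mdim X) f]) &
      (forall (X : module) m (U : 'M[F]_(m, mdim X)),
          strict_sub G X m U -> subC W X m U -> quotC W X m U -> W X)].

Definition HN_chain (G : module -> Prop) (d : Order.disp_t) (S : orderType d)
    (W : S -> module -> Prop) (M : module) (m : nat)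
    (Ms : nat -> 'M[F]_(mdim M)) (s : nat -> S) : Prop :=
  [/\ (Ms 0 == 1%:M)%MS,
      (Ms m == (0 : 'M[F]_(mdim M)))%MS,
      (forall k, (k <= m)%N -> strict_sub G M (mdim M) (Ms k)),
      (forall k, (0 < k <= m)%N -> (Ms k <= Ms k.-1)%MS /\
                                   subquot (W (s k)) M (mdim M) (mdim M) (Ms k.-1) (Ms k)) &
      (forall k, (0 < k < m)%N -> (s k.+1 < s k)%O)].

Definition strict_HN_stratification (G : module -> Prop) (d : Order.disp_t)
    (S : orderType d) (W : S -> module -> Prop) : Prop :=
  [/\ forall s, pseudo_wide G (W s),
      (forall (s0 s1 : S) (X Y : module) (f : 'M[F]_(mdim X, mdim Y)),
          (s0 < s1)%O -> W s0 X -> W s1 Y -> strict_morph G X Y f -> f = 0) &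
      (forall M, G M -> exists m Ms s, HN_chain G d S W M m Ms s)].

End Modules.

Arguments module {F}.
Arguments mdim {F L}.
Arguments act {F L}.
Arguments hom {F L X Y}.
Arguments iso {F L}.
Arguments submodule {F L X m}.
Arguments subquot {F L} C X {m1 m2}.
Arguments subC {F L} C X {m}.
Arguments quotC {F L} C X {m}.
Arguments iso_closed {F L}.
Arguments torsion_class {F L}.
Arguments subobject {F L} G B {m}.
Arguments strict_sub {F L} G B {m}.
Arguments strict_morph {F L} G {X Y}.
Arguments pseudo_wide {F L}.
Arguments HN_chain {F L} G {d S} W M.
Arguments strict_HN_stratification {F L} G {d S} W.

From Pilot Require Import Defs.
From mathcomp Require Import all_boot all_order all_algebra all_field.
Import Order.TTheory GRing.Theory.
Local Open Scope ring_scope.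

(* The two filtrations are compared from the top down.  The key fact: if a
   W_s-subquotient A/A' of M sits inside a W_s'-subquotient P/P' with s < s'
   (all four subobjects strict), then A <= P'.  Indeed the map A/A' -> P/P'
   induced by A <= P is a strict morphism -- its kernel and image meet every
   subobject in a subquotient of a strict intersection, which stays in G -- so
   it vanishes by the HN condition.  Now let M_k = N_k.  If s_(k+1) < u_(k+1),
   peeling off the layers of the M-chain below M_k (all of slope < u_(k+1))
   gives M_k <= N_(k+1), against N_(k+1) < N_k; by symmetry s_(k+1) = u_(k+1),
   and the same peeling gives M_(k+1) = N_(k+1).  Both chains being proper and
   ending in 0, they have the same length. *)

Set Implicit Arguments.
Unset Strict Implicit.

Section Subquotients.
Variables (F : fieldType) (L : falgType F).
Implicit Types (C G : module L -> Prop) (X Y Z : module L).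

(* Phrased through [kermx] so that it is monotone in the row space of [V]. *)
Definition hom_on X Y m (V : 'M[F]_(m, mdim X)) (g : 'M[F]_(mdim X, mdim Y)) :=
  forall a, (V <= kermx (act X a *m g - g *m act Y a))%MS.

Lemma hom_onP X Y m (V : 'M[F]_(m, mdim X)) (g : 'M[F]_(mdim X, mdim Y)) :
  (forall a, V *m (act X a *m g) = V *m (g *m act Y a)) <-> hom_on V g.
Proof.
split=> hV a; first by apply/sub_kermxP; rewrite mulmxBr hV subrr.
by apply/eqP; rewrite -subr_eq0 -mulmxBr; apply/eqP/sub_kermxP.
Qed.

Lemma hom_onS X Y m m' (V : 'M[F]_(m, mdim X)) (V' : 'M[F]_(m', mdim X))
    (g : 'M[F]_(mdim X, mdim Y)) :
  hom_on V g -> (V' <= V)%MS -> hom_on V' g.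
Proof. by move=> hV sV' a; apply: submx_trans sV' (hV a). Qed.

Lemma hom_on_act X Y m m' (V : 'M[F]_(m, mdim X)) (V' : 'M[F]_(m', mdim X))
    (g : 'M[F]_(mdim X, mdim Y)) a :
  hom_on V g -> (V' <= V)%MS -> V' *m act X a *m g = V' *m g *m act Y a.
Proof. by move=> hV sV'; rewrite -!mulmxA; apply/hom_onP: a; apply: hom_onS sV'. Qed.

Lemma submodule_act X m p (V : 'M[F]_(m, mdim X)) (W : 'M[F]_(p, mdim X)) a :
  submodule V -> (W <= V)%MS -> (W *m act X a <= V)%MS.
Proof. by move=> hV sW; apply: submx_trans (submxMr _ sW) (hV a). Qed.

Lemma submodule_cap X m1 m2 (A : 'M[F]_(m1, mdim X)) (B : 'M[F]_(m2, mdim X)) :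
  submodule A -> submodule B -> submodule (A :&: B)%MS.
Proof.
move=> hA hB a; rewrite sub_capmx.
by rewrite !submodule_act ?capmxSl ?capmxSr.
Qed.

Definition quot_map X Y m1 m2 (V : 'M[F]_(m1, mdim X)) (U : 'M[F]_(m2, mdim X))
    (g : 'M[F]_(mdim X, mdim Y)) :=
  [/\ hom_on V g, (1%:M <= V *m g)%MS & (V :&: kermx g == U)%MS].

Lemma subquotP C X m1 m2 (V : 'M[F]_(m1, mdim X)) (U : 'M[F]_(m2, mdim X)) :
  subquot C X V U <-> exists2 Y, C Y & exists g : 'M[F]_(mdim X, mdim Y), quot_map V U g.
Proof.
split=> [[Y [CY [g [hV sg kg]]]] | [Y CY [g [hV sg kg]]]].
  by exists Y => //; exists g; split=> //; apply/hom_onP.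
by exists Y; split=> //; exists g; split=> //; apply/hom_onP.
Qed.

Definition section_of X Y m (V : 'M[F]_(m, mdim X)) (g : 'M[F]_(mdim X, mdim Y)) :
  'M[F]_(mdim Y, mdim X) := pinvmx (V *m g) *m V.

Lemma section_ofK X Y m p (V : 'M[F]_(m, mdim X)) (g : 'M[F]_(mdim X, mdim Y))
    (T : 'M[F]_(p, mdim Y)) :
  (T <= V *m g)%MS -> T *m section_of V g *m g = T.
Proof. by move=> sT; rewrite /section_of -mulmxA -(mulmxA _ V g) mulmxA mulmxKpV. Qed.

Lemma section_of_sub X Y m p (V : 'M[F]_(m, mdim X)) (g : 'M[F]_(mdim X, mdim Y))
    (T : 'M[F]_(p, mdim Y)) :
  (T *m section_of V g <= V)%MS.
Proof. by rewrite mulmxA submxMl. Qed.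

Lemma quot_map_section1 X Y m1 m2 (V : 'M[F]_(m1, mdim X)) (U : 'M[F]_(m2, mdim X))
    (g : 'M[F]_(mdim X, mdim Y)) :
  quot_map V U g -> section_of V g *m g = 1%:M.
Proof. by case=> _ sg _; rewrite -[section_of V g]mul1mx section_ofK. Qed.

Lemma quot_map_sectionK X Y m1 m2 (V : 'M[F]_(m1, mdim X)) (U : 'M[F]_(m2, mdim X))
    (g : 'M[F]_(mdim X, mdim Y)) p (T : 'M[F]_(p, mdim Y)) :
  quot_map V U g -> T *m section_of V g *m g = T.
Proof. by case=> _ sg _; rewrite section_ofK // (submx_trans (submx1 T) sg). Qed.

Section Kernel.
Variables (X Y : module L) (m1 m2 : nat) (V : 'M[F]_(m1, mdim X)).
Variables (U : 'M[F]_(m2, mdim X)) (g : 'M[F]_(mdim X, mdim Y)).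
Hypothesis kerVg : (V :&: kermx g == U)%MS.

Lemma kernel_sub m (W : 'M[F]_(m, mdim X)) :
  (W <= V)%MS -> W *m g = 0 -> (W <= U)%MS.
Proof.
move=> sW Wg0; case/andP: kerVg => sVU _; apply: submx_trans sVU.
by rewrite sub_capmx sW; apply/sub_kermxP.
Qed.

Lemma kernel_sub_dom : (U <= V)%MS.
Proof. by case/andP: kerVg => _ sUV; apply: submx_trans sUV (capmxSl _ _). Qed.

Lemma kernel_sub_kermx : (U <= kermx g)%MS.
Proof. by case/andP: kerVg => _ sUV; apply: submx_trans sUV (capmxSr _ _). Qed.

Lemma kernel_mul0 : U *m g = 0.
Proof. exact/sub_kermxP/kernel_sub_kermx. Qed.

Lemma section_of_subB m (W : 'M[F]_(m, mdim X)) :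
  (W <= V)%MS -> (W *m g *m section_of V g - W <= U)%MS.
Proof.
move=> sW; apply: kernel_sub; first by rewrite addmx_sub ?section_of_sub ?eqmx_opp.
by rewrite mulmxBl section_ofK ?submxMr // subrr.
Qed.

Lemma section_of_mul m p (W : 'M[F]_(m, mdim X)) (h : 'M[F]_(mdim X, p)) :
  (U <= kermx h)%MS -> (W <= V)%MS -> W *m g *m section_of V g *m h = W *m h.
Proof.
move=> sUh sW; apply/eqP; rewrite -subr_eq0 -mulmxBl; apply/eqP/sub_kermxP.
exact: submx_trans (section_of_subB sW) sUh.
Qed.

Lemma sub_section_of_add m p (W : 'M[F]_(m, mdim X)) (T : 'M[F]_(p, mdim Y)) :
  (W <= V)%MS -> (W *m g <= T)%MS -> (W <= T *m section_of V g + U)%MS.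
Proof.
move=> sW sT; set W' := W *m g *m section_of V g.
have -> : W = W' - (W' - W) by rewrite opprB addrC subrK.
by apply: addmx_sub_adds; rewrite ?submxMr // eqmx_opp section_of_subB.
Qed.

Lemma section_of_image m p (W : 'M[F]_(m, mdim X)) (T : 'M[F]_(p, mdim Y)) :
  (T <= V *m g)%MS -> (W <= T *m section_of V g + U)%MS -> (W *m g <= T)%MS.
Proof.
move=> sT /sub_addsmxP[[u1 u2] ->] /=.
by rewrite mulmxDl -(mulmxA u2) kernel_mul0 mulmx0 addr0 -mulmxA section_ofK ?submxMl.
Qed.

End Kernel.

Lemma subquot_eqmx C X m1 m2 m1' m2' (V : 'M[F]_(m1, mdim X)) (U : 'M[F]_(m2, mdim X))
    (V' : 'M[F]_(m1', mdim X)) (U' : 'M[F]_(m2', mdim X)) :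
  subquot C X V U -> (V :=: V')%MS -> (U :=: U')%MS -> subquot C X V' U'.
Proof.
move=> /subquotP[Y CY [g [hV sg kg]]] eV eU.
apply/subquotP; exists Y => //; exists g; split.
- by apply: hom_onS hV _; rewrite eV.
- by rewrite -(eqmxMr g eV).
apply/andP; split.
  rewrite -eU; apply: (kernel_sub kg); first by rewrite eV capmxSl.
  exact/sub_kermxP/capmxSr.
by rewrite -eU sub_capmx -eV (kernel_sub_dom kg) (kernel_sub_kermx kg).
Qed.

Lemma subquot_preimage C X Y m1 m2 (V : 'M[F]_(m1, mdim X)) (U : 'M[F]_(m2, mdim X))
    (g : 'M[F]_(mdim X, mdim Y)) p2 p1 (T2 : 'M[F]_(p2, mdim Y)) (T1 : 'M[F]_(p1, mdim Y)) :
  quot_map V U g -> submodule U -> subquot C Y T2 T1 ->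
  subquot C X (T2 *m section_of V g + U)%MS (T1 *m section_of V g + U)%MS.
Proof.
move=> qg subU /subquotP[Z CZ [h [hT2 sh kh]]]; have [hV _ kg] := qg.
have secK p (T : 'M[F]_(p, mdim Y)) := quot_map_sectionK T qg.
apply/subquotP; exists Z => //; exists (g *m h); split.
- move=> a; rewrite addsmx_sub; apply/andP; split; apply/sub_kermxP.
    rewrite mulmxBr; apply/eqP; rewrite subr_eq0; apply/eqP.
    rewrite (mulmxA (act X a)) !(mulmxA (T2 *m section_of V g)).
    rewrite (hom_on_act a hV (section_of_sub _ _ _)) secK.
    by rewrite (hom_on_act a hT2 (submx_refl _)).
  rewrite mulmxBr (mulmxA (act X a)) !(mulmxA U) (kernel_mul0 kg).
  by rewrite (sub_kermxP (submx_trans (subU a) (kernel_sub_kermx kg))) !mul0mx subrr.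
- apply: submx_trans sh _.
  have -> : T2 *m h = T2 *m section_of V g *m (g *m h) by rewrite mulmxA secK.
  exact/submxMr/addsmxSl.
apply/andP; split.
  set K := (_ :&: _)%MS; case/sub_addsmxP: (capmxSl _ _ : (K <= _)%MS) => -[u1 u2] /= eK.
  have Kg : K *m g = u1 *m T2.
    by rewrite eK mulmxDl -(mulmxA u2) (kernel_mul0 kg) mulmx0 addr0 -mulmxA secK.
  have sT1 : (u1 *m T2 <= T1)%MS.
    apply: (kernel_sub kh); first exact: submxMl.
    by rewrite -Kg -mulmxA; apply/sub_kermxP/capmxSr.
  by rewrite eK addmx_sub_adds ?submxMl // mulmxA submxMr.
rewrite sub_capmx addsmxS ?submxMr ?(kernel_sub_dom kh) //=.
rewrite addsmx_sub; apply/andP; split; apply/sub_kermxP.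
  by rewrite mulmxA secK (kernel_mul0 kh).
by rewrite mulmxA (kernel_mul0 kg) mul0mx.
Qed.

Lemma subquot_image C X Y m1 m2 (V : 'M[F]_(m1, mdim X)) (U : 'M[F]_(m2, mdim X))
    (g : 'M[F]_(mdim X, mdim Y)) q2 q1 (V2 : 'M[F]_(q2, mdim X)) (V1 : 'M[F]_(q1, mdim X)) :
  hom_on V g -> (V :&: kermx g == U)%MS -> (U <= V1)%MS -> (V2 <= V)%MS ->
  submodule V2 -> subquot C X V2 V1 -> subquot C Y (V2 *m g) (V1 *m g).
Proof.
move=> hV kg sUV1 sV2 subV2 /subquotP[Z CZ [h [hV2 sh kh]]].
set H := section_of V g *m h.
have gH q (W : 'M[F]_(q, mdim X)) : (W <= V2)%MS -> W *m g *m H = W *m h.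
  move=> sW; rewrite /H mulmxA (section_of_mul kg) //.
    exact: submx_trans sUV1 (kernel_sub_kermx kh).
  exact: submx_trans sW sV2.
apply/subquotP; exists Z => //; exists H; split.
- move=> a; apply/sub_kermxP.
  rewrite mulmxBr; apply/eqP; rewrite subr_eq0; apply/eqP.
  rewrite (mulmxA (V2 *m g)) -(hom_on_act a hV sV2) gH ?subV2 //.
  by rewrite (hom_on_act a hV2 (submx_refl _)) (mulmxA (V2 *m g)) gH.
- by rewrite gH.
apply/andP; split.
  case/submxP: (capmxSl (V2 *m g) (kermx H)) => R eR.
  rewrite eR mulmxA; apply: submxMr; apply: (kernel_sub kh); first exact: submxMl.
  rewrite -(gH _ (R *m V2)) ?submxMl // -(mulmxA R V2 g) -eR.
  exact/sub_kermxP/capmxSr.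
rewrite sub_capmx submxMr ?(kernel_sub_dom kh) //=; apply/sub_kermxP.
by rewrite gH ?(kernel_sub_dom kh) // (kernel_mul0 kh).
Qed.

Lemma subquot_quot G X m1 m2 q (V : 'M[F]_(m1, mdim X)) (U : 'M[F]_(m2, mdim X))
    (U' : 'M[F]_(q, mdim X)) :
  torsion_class G -> subquot G X V U -> (U <= U')%MS -> (U' <= V)%MS -> submodule U' ->
  subquot G X V U'.
Proof.
case=> _ quotG _ /subquotP[Y GY [g [hV sg kg]]] sUU' sU'V subU'.
have subU'g : submodule (U' *m g).
  by move=> a; rewrite -(hom_on_act a hV sU'V) submxMr ?subU'.
case/subquotP: (quotG Y q (U' *m g) GY subU'g) => Z GZ [h [hVg sh kh]].
apply/subquotP; exists Z => //; exists (g *m h); split.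
- move=> a; apply/sub_kermxP; rewrite mulmxBr; apply/eqP; rewrite subr_eq0; apply/eqP.
  rewrite !mulmxA (hom_on_act a hV (submx_refl _)).
  by rewrite (hom_on_act a hVg (submx1 (V *m g))).
- by rewrite mulmxA; apply: submx_trans sh _; apply: submxMr.
apply/andP; split.
  set K := (V :&: kermx (g *m h))%MS.
  have sKV : (K <= V)%MS by apply: capmxSl.
  have : (K *m g <= U' *m g)%MS.
    apply: (kernel_sub kh); first exact: submx1.
    by rewrite -mulmxA; apply/sub_kermxP/capmxSr.
  case/submxP=> R eR.
  have sKU : (K - R *m U' <= U)%MS.
    apply: (kernel_sub kg); last by rewrite mulmxBl eR mulmxA subrr.
    by rewrite addmx_sub // eqmx_opp (submx_trans _ sU'V) ?submxMl.
  by rewrite -[K](subrK (R *m U')) addmx_sub ?submxMl // (submx_trans sKU sUU').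
by rewrite sub_capmx sU'V /=; apply/sub_kermxP; rewrite mulmxA (kernel_mul0 kh).
Qed.

Lemma subC_image G X Z m (V : 'M[F]_(m, mdim X)) (f : 'M[F]_(mdim X, mdim Z)) :
  torsion_class G -> subC G X V -> submodule V -> hom_on V f -> subC G Z (V *m f).
Proof.
move=> hG GV subV hV; set K := (V :&: kermx f)%MS.
(* [V *m f] is the image of the quotient [V/K] of [V]. *)
have subK : submodule K.
  move=> a; rewrite sub_capmx submodule_act ?capmxSl //=; apply/sub_kermxP.
  by rewrite (hom_on_act a hV (capmxSl _ _)) (sub_kermxP (capmxSr _ _)) mul0mx.
have kerK : (V :&: kermx f == K)%MS by rewrite submx_refl.
have := subquot_quot hG GV (sub0mx _ _) (capmxSl _ _) subK.
move/(subquot_image hV kerK (submx_refl K) (submx_refl V) subV)/subquot_eqmx.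
by apply=> //; rewrite (sub_kermxP (capmxSr _ _)); apply: eqmx0.
Qed.

Section Restriction.
Variables (X : module L) (m : nat) (B : 'M[F]_(m, mdim X)).
Hypothesis subB : submodule B.

Lemma row_base_pinvK p (A : 'M[F]_(p, mdim X)) :
  (A <= B)%MS -> A *m pinvmx (row_base B) *m row_base B = A.
Proof. by move=> sAB; rewrite mulmxKpV ?eq_row_base. Qed.

Definition res_act (a : L) : 'M[F]_(\rank B) :=
  row_base B *m act X a *m pinvmx (row_base B).

Lemma res_act_linear (c : F) (a b : L) : res_act (c *: a + b) = c *: res_act a + res_act b.
Proof. by rewrite /res_act act_linear mulmxDr mulmxDl -scalemxAr -scalemxAl. Qed.

Lemma res_act_mul (a b : L) : res_act (a * b) = res_act a *m res_act b.
Proof.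
rewrite /res_act (mulmxA (_ *m pinvmx _)) (mulmxA _ (row_base B)) row_base_pinvK.
  by rewrite act_mul (mulmxA (row_base B)).
by apply: (submodule_act a subB); rewrite eq_row_base.
Qed.

Lemma res_act1 : res_act 1 = 1%:M.
Proof. by rewrite /res_act act_one mulmx1 mulmxVp ?row_base_free. Qed.

Definition res_module : module L :=
  @Module F L (\rank B) res_act res_act_linear res_act_mul res_act1.

Lemma res_quot_map :
  @quot_map X res_module _ _ B (0 : 'M_(mdim X)) (pinvmx (row_base B)).
Proof.
split.
- apply/hom_onP => a /=; rewrite /res_act (mulmxA B (act X a)) (mulmxA B (pinvmx _)).
  by rewrite 2!(mulmxA (B *m pinvmx (row_base B))) row_base_pinvK.
- by rewrite -(mulmxVp (row_base_free B)) submxMr ?eq_row_base.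
rewrite sub0mx andbT -[X in (X <= _)%MS]row_base_pinvK ?capmxSl //.
by rewrite (sub_kermxP (capmxSr _ _)) mul0mx sub0mx.
Qed.

Lemma res_submodule p (U : 'M[F]_(p, mdim X)) :
  submodule U -> (U <= B)%MS -> submodule (X := res_module) (U *m pinvmx (row_base B)).
Proof.
move=> subU sUB a /=; rewrite /res_act 2!(mulmxA (U *m pinvmx (row_base B))).
by rewrite row_base_pinvK // submxMr ?subU.
Qed.

End Restriction.

Lemma subC_ext G X m1 m2 (B : 'M[F]_(m1, mdim X)) (U : 'M[F]_(m2, mdim X)) :
  torsion_class G -> subquot G X B U -> subC G X U -> submodule B -> submodule U ->
  subC G X B.
Proof.
(* Extension closure only speaks of whole modules, so [B] is made one. *)
case=> _ _ extG GBU GU subB subU.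
have sUB : (U <= B)%MS by case/subquotP: GBU => Y _ [g [_ _ /kernel_sub_dom]].
have [hB sB kB] := res_quot_map subB.
have GR : G (res_module subB).
  apply: (extG (res_module subB) _ (U *m pinvmx (row_base B))); first exact: res_submodule.
    apply: subquot_eqmx (subquot_image hB kB (sub0mx _ _) sUB subU GU) (eqmx_refl _) _.
    by rewrite mul0mx; apply: eqmx0.
  apply: subquot_eqmx (subquot_image hB kB (sub0mx _ _) (submx_refl B) subB GBU) _ (eqmx_refl _).
  by apply/eqmxP; rewrite submx1 sB.
by apply/subquotP; exists (res_module subB) => //; exists (pinvmx (row_base B)).
Qed.

Lemma subobject1 G X : G X -> subobject G X (1%:M : 'M[F]_(mdim X)).
Proof.
move=> GX; split=> [a|]; first exact: submx1.
apply/subquotP; exists X => //; exists 1%:M; split.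
- by move=> a; apply/sub_kermxP; rewrite mul1mx mulmx1 mul1mx subrr.
- by rewrite mulmx1.
have /eqP -> : kermx (1%:M : 'M[F]_(mdim X)) == 0.
  by rewrite kermx_eq0 row_free_unit unitmx1.
by rewrite cap1mx !sub0mx.
Qed.

Lemma preimage_subobject G X Y m1 m2 p (V : 'M[F]_(m1, mdim X)) (U : 'M[F]_(m2, mdim X))
    (g : 'M[F]_(mdim X, mdim Y)) (T : 'M[F]_(p, mdim Y)) :
  torsion_class G -> quot_map V U g -> submodule V -> subobject G X U -> subobject G Y T ->
  subobject G X (T *m section_of V g + U)%MS.
Proof.
move=> hG qg subV [subU GU] [subT GT]; have [hV _ kg] := qg.
have subB : submodule (T *m section_of V g + U)%MS.
  move=> a; rewrite addsmxMr addsmx_sub (submx_trans (subU a) (addsmxSr _ _)) andbT.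
  apply: (sub_section_of_add kg); first exact: submodule_act a subV (section_of_sub _ _ _).
  by rewrite (hom_on_act a hV (section_of_sub _ _ _)) (quot_map_sectionK _ qg) subT.
split=> //; apply: (subC_ext hG _ GU subB subU).
apply: subquot_eqmx (subquot_preimage qg subU GT) (eqmx_refl _) _.
by rewrite mul0mx; apply: adds0mx.
Qed.

Section FactorMap.
Variables (G : module L -> Prop) (M Y Z : module L).
Variables (A A' P P' : 'M[F]_(mdim M)).
Variables (gA : 'M[F]_(mdim M, mdim Y)) (gP : 'M[F]_(mdim M, mdim Z)).
Hypotheses (hG : torsion_class G) (GY : G Y) (GZ : G Z).
Hypotheses (strA : strict_sub G M A) (strA' : strict_sub G M A').
Hypotheses (strP : strict_sub G M P) (strP' : strict_sub G M P').
Hypotheses (sAP : (A <= P)%MS) (sA'P' : (A' <= P')%MS).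
Hypotheses (qA : quot_map A A' gA) (qP : quot_map P P' gP).

(* The map [A/A' -> P/P'] induced by the inclusion [A <= P]. *)
Definition factor_map : 'M[F]_(mdim Y, mdim Z) := section_of A gA *m gP.

Lemma factor_mapE m (W : 'M[F]_(m, mdim M)) :
  (W <= A)%MS -> W *m gA *m factor_map = W *m gP.
Proof.
have [_ _ kA] := qA; have [_ _ kP] := qP.
move=> sW; rewrite /factor_map mulmxA (section_of_mul kA) //.
exact: submx_trans sA'P' (kernel_sub_kermx kP).
Qed.

Lemma factor_map_hom : Defs.hom factor_map.
Proof.
have [_ [subA _] _] := strA; have [hA _ _] := qA; have [hP _ _] := qP.
move=> a; set S := section_of A gA.
have sSA : (S <= A)%MS by apply: submxMl.
have sSaA : (S *m act M a <= A)%MS := submodule_act a subA sSA.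
rewrite {2}/factor_map -(hom_on_act a hP (submx_trans sSA sAP)) -(factor_mapE sSaA).
by rewrite (hom_on_act a hA sSA) (quot_map_section1 qA) mul1mx.
Qed.

Lemma factor_map_kermx_cap m (V : 'M[F]_(m, mdim Y)) :
  subobject G Y V -> subC G Y (kermx factor_map :&: V)%MS.
Proof.
move=> objV; have [_ objA _] := strA; have [_ objA' _] := strA'.
have [_ [subP' _] strictP'] := strP'.
have [hA sA kA] := qA; have [_ _ kP] := qP.
set B := (V *m section_of A gA + A')%MS.
have objB : subobject G M B := preimage_subobject hG qA objA.1 objA' objV.
have sP'BA : (P' :&: B <= A)%MS.
  by rewrite (submx_trans (capmxSr _ _)) // addsmx_sub section_of_sub (kernel_sub_dom kA).
have := subC_image hG (strictP' _ B objB) (submodule_cap subP' objB.1) (hom_onS hA sP'BA).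
move/subquot_eqmx; apply; last exact: eqmx_refl.
apply/eqmxP/andP; split.
  rewrite sub_capmx; apply/andP; split.
    apply/sub_kermxP; rewrite factor_mapE //.
    exact/sub_kermxP/(submx_trans (capmxSl _ _) (kernel_sub_kermx kP)).
  by apply: (section_of_image kA (submx_trans (submx1 V) sA)); apply: capmxSr.
set K := (kermx factor_map :&: V)%MS.
have sKS : (K *m section_of A gA <= P' :&: B)%MS.
  rewrite sub_capmx; apply/andP; split.
    apply: (kernel_sub kP); first exact: submx_trans (section_of_sub _ _ _) sAP.
    rewrite -(factor_mapE (section_of_sub _ _ _)) (quot_map_sectionK _ qA).
    exact/sub_kermxP/capmxSl.
  exact: submx_trans (submxMr _ (capmxSr _ _)) (addsmxSl _ _).
by rewrite -[K in (K <= _)%MS](quot_map_sectionK _ qA) submxMr.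
Qed.

Lemma factor_map_img_cap m (V : 'M[F]_(m, mdim Z)) :
  subobject G Z V -> subC G Z (factor_map :&: V)%MS.
Proof.
move=> objV; have [_ [subA _] strictA] := strA; have [_ objP _] := strP.
have [_ objP' _] := strP'.
have [hP sP kP] := qP.
set B := (V *m section_of P gP + P')%MS.
have objB : subobject G M B := preimage_subobject hG qP objP.1 objP' objV.
have sABP : (A :&: B <= P)%MS := submx_trans (capmxSl _ _) sAP.
have := subC_image hG (strictA _ B objB) (submodule_cap subA objB.1) (hom_onS hP sABP).
move/subquot_eqmx; apply; last exact: eqmx_refl.
apply/eqmxP/andP; split.
  rewrite sub_capmx; apply/andP; split.
    by rewrite -(factor_mapE (capmxSl _ _)) submxMl.
  by apply: (section_of_image kP (submx_trans (submx1 V) sP)); apply: capmxSr.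
set K := (factor_map :&: V)%MS.
set x := K *m pinvmx factor_map *m section_of A gA.
have xgP : x *m gP = K by rewrite -mulmxA; apply: mulmxKpV; apply: capmxSl.
have sxA : (x <= A)%MS by apply: section_of_sub.
have sxAB : (x <= A :&: B)%MS.
  rewrite sub_capmx sxA (sub_section_of_add kP) ?xgP ?capmxSr //.
  exact: submx_trans sxA sAP.
by rewrite -[K in (K <= _)%MS]xgP submxMr.
Qed.

Lemma factor_map_strict : strict_morph G factor_map.
Proof.
have hom_f := factor_map_hom.
split=> //.
  split=> //; last exact: factor_map_kermx_cap.
  split=> [a|]; first by apply/sub_kermxP; rewrite -mulmxA hom_f mulmxA mulmx_ker mul0mx.
  by have := factor_map_kermx_cap (subobject1 GY); rewrite capmx1.
split=> //; last exact: factor_map_img_cap.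
split=> [a|]; first by rewrite -hom_f submxMl.
apply: subquot_eqmx (factor_map_img_cap (subobject1 GZ)) _ (eqmx_refl _).
by apply: capmxT; rewrite row_full_unit unitmx1.
Qed.

Lemma factor_map_eq0_sub : factor_map = 0 -> (A <= P')%MS.
Proof.
have [_ _ kP] := qP.
by move=> f0; apply: (kernel_sub kP sAP); rewrite -(factor_mapE (submx_refl A)) f0 mulmx0.
Qed.

End FactorMap.

Lemma subquot_slope_lt_sub G d (S : orderType d) (W : S -> module L -> Prop) M
    (s1 s2 : S) (A A' P P' : 'M[F]_(mdim M)) :
  torsion_class G -> strict_HN_stratification G W -> (s1 < s2)%O ->
  strict_sub G M A -> strict_sub G M A' -> strict_sub G M P -> strict_sub G M P' ->
  (A <= P)%MS -> (A' <= P')%MS -> subquot (W s1) M A A' -> subquot (W s2) M P P' ->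
  (A <= P')%MS.
Proof.
move=> hG [wide hom0 _] lt12 strA strA' strP strP' sAP sA'P'.
move=> /subquotP[Y WY [gA qA]] /subquotP[Z WZ [gP qP]].
have [_ WG1 _ _ _] := wide s1; have [_ WG2 _ _ _] := wide s2.
apply: (factor_map_eq0_sub sAP sA'P' qA qP); apply: (hom0 _ _ _ _ _ lt12 WY WZ).
exact: factor_map_strict hG (WG1 _ WY) (WG2 _ WZ) strA strA' strP strP' sAP sA'P' qA qP.
Qed.

End Subquotients.

Section HNUniqueness.
Variables (F : fieldType) (L : falgType F) (G : module L -> Prop).
Variables (d : Order.disp_t) (S : orderType d) (W : S -> module L -> Prop) (M : module L).
Hypotheses (hG : torsion_class G) (hW : strict_HN_stratification G W).

Definition proper_chain r (Ns : nat -> 'M[F]_r) n :=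
  forall k, (0 < k <= n)%N -> (Ns k < Ns k.-1)%MS.

Lemma proper_chain_end r (Ns : nat -> 'M[F]_r) n k :
  proper_chain Ns n -> (k <= n)%N -> (Ns k <= (0 : 'M_r))%MS -> k = n.
Proof.
move=> properN kn Nk0; apply/eqP; rewrite eqn_leq kn leqNgt; apply/negP => kn'.
by move: (ltmx_sub_trans (properN k.+1 kn') Nk0); rewrite ltmx0.
Qed.

Lemma HN_chain_subW m Ms s :
  HN_chain G W M m Ms s -> forall i j, (i <= j <= m)%N -> (Ms j <= Ms i)%MS.
Proof.
case=> _ _ _ step _ i j /andP[+ jm].
elim: j jm => [_|j IH jm]; first by rewrite leqn0 => /eqP->.
rewrite leq_eqVlt ltnS => /orP[/eqP-> | ij]; first exact: submx_refl.
exact: submx_trans (step j.+1 jm).1 (IH (ltnW jm) ij).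
Qed.

Lemma HN_chain_slope_lt m Ms s :
  HN_chain G W M m Ms s -> forall i j, (0 < i)%N -> (i < j <= m)%N -> (s j < s i)%O.
Proof.
case=> _ _ _ _ step i j i0 /andP[+ jm].
elim: j jm => [_|j IH jm]; first by rewrite ltn0.
rewrite ltnS leq_eqVlt => /orP[/eqP ij | ij]; first by subst i; apply: step; rewrite i0 jm.
apply: lt_trans (IH (ltnW jm) ij); apply: step; rewrite jm andbT.
exact: leq_trans i0 (ltnW ij).
Qed.

Lemma HN_chains_sub_step m Ms s n Ns u k j :
  HN_chain G W M m Ms s -> HN_chain G W M n Ns u -> (k < m)%N -> (j <= n)%N ->
  (Ns j <= Ms k)%MS -> (forall i, (j < i <= n)%N -> (u i < s k.+1)%O) ->
  (Ns j <= Ms k.+1)%MS.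
Proof.
move=> chM chN km jn sNM lt_u.
have [_ /andP[Nn0 _] strN stepN _] := chN; have [_ _ strM stepM _] := chM.
have [_ qMk] := stepM k.+1 km.
suff sub_next : forall t i, (j <= i)%N -> (i + t)%N = n -> (Ns i <= Ms k.+1)%MS.
  by apply: (sub_next (n - j)%N j) => //; rewrite subnKC.
elim=> [|t IH] i ji it.
  by move: it; rewrite addn0 => ->; apply: submx_trans Nn0 (sub0mx _ _).
have i_n : (i < n)%N by rewrite -it addnS ltnS leq_addr.
have [_ qNi] := stepN i.+1 i_n.
have lt_ui : (u i.+1 < s k.+1)%O by apply: lt_u; rewrite ltnS ji.
have sNiM : (Ns i <= Ms k)%MS.
  by apply: submx_trans sNM; apply: HN_chain_subW chN _ _ _; rewrite ji (ltnW i_n).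
apply: (subquot_slope_lt_sub hG hW lt_ui (strN i (ltnW i_n)) (strN i.+1 i_n)
  (strM k (ltnW km)) (strM k.+1 km) sNiM _ qNi qMk).
by apply: IH; rewrite ?(leqW ji) // addSnnS.
Qed.

Lemma HN_chain_slope_le m Ms s :
  HN_chain G W M m Ms s -> forall i j, (0 < i)%N -> (i <= j <= m)%N -> (s j <= s i)%O.
Proof.
move=> chM i j i0 /andP[]; rewrite leq_eqVlt => /orP[/eqP-> // | ij] jm.
by rewrite ltW // (HN_chain_slope_lt chM i0) ?ij.
Qed.

Lemma HN_chains_slope_ge m Ms s n Ns u k :
  HN_chain G W M m Ms s -> HN_chain G W M n Ns u -> proper_chain Ns n ->
  (k < m)%N -> (k < n)%N -> (Ms k == Ns k)%MS -> (u k.+1 <= s k.+1)%O.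
Proof.
move=> chM chN properN km kn /andP[sMN sNM]; rewrite leNgt; apply/negP => lt_su.
have sMN' : (Ms k <= Ns k.+1)%MS.
  apply: (HN_chains_sub_step chN chM kn (ltnW km) sMN) => i /andP[ki im].
  by apply: le_lt_trans lt_su; apply: (HN_chain_slope_le chM); rewrite ?ki.
by case/andP: (properN k.+1 kn) => _ /negP; apply; apply: submx_trans sNM sMN'.
Qed.

Lemma HN_chains_next_sub m Ms s n Ns u k :
  HN_chain G W M m Ms s -> HN_chain G W M n Ns u -> (k < m)%N -> (k < n)%N ->
  (Ns k <= Ms k)%MS -> s k.+1 = u k.+1 -> (Ns k.+1 <= Ms k.+1)%MS.
Proof.
move=> chM chN km kn sNM su.
apply: (HN_chains_sub_step chM chN km kn).
  by apply: submx_trans sNM; apply: (HN_chain_subW chN); rewrite leqnSn.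
by move=> i /andP[ki iN]; rewrite su (HN_chain_slope_lt chN) ?ki.
Qed.

Lemma HN_chains_agree m Ms s n Ns u :
  HN_chain G W M m Ms s -> proper_chain Ms m -> HN_chain G W M n Ns u -> proper_chain Ns n ->
  forall k, (k <= m)%N -> (k <= n)%N ->
  (Ms k == Ns k)%MS /\ (forall i, (0 < i <= k)%N -> s i = u i).
Proof.
move=> chM properM chN properN; elim=> [|k IH] km kn.
  have [/eqmxP M0 _ _ _ _] := chM; have [/eqmxP N0 _ _ _ _] := chN.
  by split=> [|[]//]; apply/eqmxP; apply: eqmx_trans M0 (eqmx_sym N0).
have [eqMN eq_su] := IH (ltnW km) (ltnW kn).
have eqNM : (Ns k == Ms k)%MS by rewrite andbC.
have su : s k.+1 = u k.+1.
  apply: le_anti; rewrite (HN_chains_slope_ge chN chM properM) //.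
  by rewrite (HN_chains_slope_ge chM chN properN).
split.
  case/andP: eqMN => sMN sNM.
  by rewrite (HN_chains_next_sub chM chN) ?(HN_chains_next_sub chN chM).
move=> i /andP[i0]; rewrite leq_eqVlt => /orP[/eqP-> // | ik].
by apply: eq_su; rewrite i0.
Qed.

End HNUniqueness.

Theorem mainTheorem19 (F : fieldType) (L : falgType F) (G : module L -> Prop)
    (hG : torsion_class G) (d : Order.disp_t) (S : orderType d)
    (W : S -> module L -> Prop) (hW : strict_HN_stratification G W)
    (M : module L) (hM : G M)
    (m : nat) (Ms : nat -> 'M[F]_(mdim M)) (s : nat -> S)
    (n : nat) (Ns : nat -> 'M[F]_(mdim M)) (u : nat -> S) :
    HN_chain G W M m Ms s ->
    (forall k, (0 < k <= m)%N -> (Ms k < Ms k.-1)%MS) ->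
    HN_chain G W M n Ns u ->
    (forall j, (0 < j <= n)%N -> (Ns j < Ns j.-1)%MS) ->
    m = n /\
    (forall k, (0 < k <= m)%N -> s k = u k) /\
    (forall k, (k <= m)%N -> (Ms k == Ns k)%MS).
Proof.
move=> chM properM chN properN.
have agree := HN_chains_agree hG hW chM properM chN properN.
have [_ /andP[Mm0 _] _ _ _] := chM; have [_ /andP[Nn0 _] _ _ _] := chN.
have mn : m = n.
  case: (leqP m n) => [mn | /ltnW nm].
    have [/andP[_ sNM] _] := agree m (leqnn m) mn.
    exact: proper_chain_end properN mn (submx_trans sNM Mm0).
  have [/andP[sMN _] _] := agree n nm (leqnn n).
  exact/esym/(proper_chain_end properM nm (submx_trans sMN Nn0)).
subst n; split=> //; split=> k; last by move=> km; case: (agree k km km).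
by move=> /andP[k0 km]; case: (agree k km km) => _; apply; rewrite k0 leqnn.
Qed.
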